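(* Let $\mathfrak{g}$ be a semi-simple real Lie algebra with a faithful finite dimensional real representation $\mathfrak{g}\to\mathrm{End}(W)$, and suppose there is a symmetric bilinear $\mathfrak{g}$-equivariant map $\wedge:W\times W\to W^*$ which does not vanish identically on any $2$-dimensional linear subspace of $W$. Let $\mu:\mathfrak{sl}_2(\mathbf{R})\to\mathfrak{g}$ be an injective Lie algebra morphism. Then every highest weight of the representation $\mathfrak{sl}_2(\mathbf{R})\to\mathfrak{g}\to\mathrm{End}(W)$ is at most $4$, and at most one irreducible summand has highest weight $4$.
   Context: Weights of $\mathfrak{sl}_2(\mathbf{R})$-representations are taken with respect to the Cartan subalgebra of diagonal matrices, normalized so that the irreducible representation of dimension $n+1$ (on homogeneous polynomials of degree $n$ in two variables) has weights $-n,-n+2,\dots,n-2,n$ and highest weight $n$; i.e. weights are the eigenvalues of $\mathrm{diag}(1,-1)$. $W^*$ is the dual representation and equivariance of $\wedge$ means $X\cdot(a\wedge b)=(X\cdot a)\wedge b+a\wedge(X\cdot b)$. *)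

(* Real scalars are modelled by an arbitrary real closed
   field R : rcfType. *)
From HB Require Import structures.
From mathcomp Require Import all_boot all_order all_algebra.
Set Implicit Arguments. Unset Strict Implicit. Unset Printing Implicit Defensive.
Import Order.TTheory GRing.Theory Num.Theory.
Local Open Scope ring_scope.

Section LieDefs.
Variable R : rcfType.

Definition lie_br (m : nat) (A B : 'M[R]_m) : 'M[R]_m := A *m B - B *m A.

Variable n : nat.
(* W = 'cV[R]_n (column vectors); End(W) = 'M[R]_n acting by A *m w.
   Linear subspaces of End(W) are encoded as row spaces G : 'M_(n*n)
   of mxvec-encoded matrices:  A \in G  means  (mxvec A <= G)%MS. *)

Definition lie_subalgebra (G : 'M[R]_(n * n)) : Prop :=
  forall A B : 'M[R]_n, (A \in G)%MS -> (B \in G)%MS -> (lie_br A B \in G)%MS.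

Definition is_ideal (G I : 'M[R]_(n * n)) : Prop :=
  (I <= G)%MS /\
  forall A B : 'M[R]_n, (A \in G)%MS -> (B \in I)%MS -> (lie_br A B \in I)%MS.

Definition derived (I : 'M[R]_(n * n)) : 'M[R]_(n * n) :=
  (\sum_(i < n * n) \sum_(j < n * n)
     <<mxvec (lie_br (vec_mx (row i I)) (vec_mx (row j I)))>>)%MS.

Definition solvable_sub (I : 'M[R]_(n * n)) : Prop :=
  exists k : nat, iter k derived I = 0.

Definition semisimple (G : 'M[R]_(n * n)) : Prop :=
  forall I : 'M[R]_(n * n), is_ideal G I -> solvable_sub I -> I = 0.

Definition sl2h : 'M[R]_2 :=
  \matrix_(i < 2, j < 2) (if i == j then (if i == ord0 then 1 else -1) else 0).

(* mu : sl_2 -> g injective Lie algebra morphism (only its values on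
   traceless matrices matter) *)
Definition sl2_morphism (G : 'M[R]_(n * n)) (mu : 'M[R]_2 -> 'M[R]_n) : Prop :=
  [/\ forall X, \tr X = 0 -> (mu X \in G)%MS,
      forall (a : R) X Y, \tr X = 0 -> \tr Y = 0 ->
        mu (a *: X + Y) = a *: mu X + mu Y,
      forall X Y, \tr X = 0 -> \tr Y = 0 ->
        mu (lie_br X Y) = lie_br (mu X) (mu Y)
    & forall X Y, \tr X = 0 -> \tr Y = 0 -> mu X = mu Y -> X = Y].

(* wedge : W x W -> W^*, with W^* = 'rV_n, pairing phi(w) = phi *m w. *)
Definition wedge_bilinear (wedge : 'cV[R]_n -> 'cV[R]_n -> 'rV[R]_n) : Prop :=
  (forall (s : R) a a' b, wedge (s *: a + a') b = s *: wedge a b + wedge a' b) /\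
  (forall (s : R) a b b', wedge a (s *: b + b') = s *: wedge a b + wedge a b').

Definition wedge_symmetric (wedge : 'cV[R]_n -> 'cV[R]_n -> 'rV[R]_n) : Prop :=
  forall a b, wedge a b = wedge b a.

(* equivariance: X.(a ^ b) = (X.a) ^ b + a ^ (X.b), where X acts on
   W^* by the dual action  X.phi = - phi *m A_X. *)
Definition wedge_equivariant (G : 'M[R]_(n * n))
  (wedge : 'cV[R]_n -> 'cV[R]_n -> 'rV[R]_n) : Prop :=
  forall A : 'M[R]_n, (A \in G)%MS ->
    forall a b, - (wedge a b *m A) = wedge (A *m a) b + wedge a (A *m b).

Definition wedge_nonvanishing2 (wedge : 'cV[R]_n -> 'cV[R]_n -> 'rV[R]_n) : Prop :=
  forall a b : 'cV[R]_n, \rank (row_mx a b) = 2%N ->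
    exists s t s' t' : R, wedge (s *: a + t *: b) (s' *: a + t' *: b) != 0.

(* Subspaces of W are row spaces U : 'M_n; the column vector w lies in U
   iff (w^T <= U)%MS. *)
Definition sl2_invariant (mu : 'M[R]_2 -> 'M[R]_n) (U : 'M[R]_n) : Prop :=
  forall X : 'M[R]_2, \tr X = 0 -> (U *m (mu X)^T <= U)%MS.

Definition sl2_irreducible (mu : 'M[R]_2 -> 'M[R]_n) (U : 'M[R]_n) : Prop :=
  [/\ U != 0, sl2_invariant mu U &
      forall V : 'M[R]_n, sl2_invariant mu V -> (V <= U)%MS ->
        V = 0 \/ (V == U)%MS].

Definition weight_vector (mu : 'M[R]_2 -> 'M[R]_n) (U : 'M[R]_n)
  (lam : R) (v : 'cV[R]_n) : Prop :=
  [/\ v != 0, (v^T <= U)%MS & mu sl2h *m v = lam *: v].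

Definition highest_weight (mu : 'M[R]_2 -> 'M[R]_n) (U : 'M[R]_n) (lam : R) : Prop :=
  (exists v, weight_vector mu U lam v) /\
  (forall lam' v, weight_vector mu U lam' v -> lam' <= lam).

Definition sl2_decomposition (mu : 'M[R]_2 -> 'M[R]_n) (k : nat)
  (U : 'I_k -> 'M[R]_n) : Prop :=
  [/\ forall i, sl2_irreducible mu (U i),
      mxdirect (\sum_(i < k) U i) &
      (\sum_(i < k) U i == 1%:M)%MS].

End LieDefs.

From HB Require Import structures.
From mathcomp Require Import all_boot all_order all_algebra.
From mathcomp Require Import ring lra.
Import Order.TTheory GRing.Theory Num.Theory.
Local Open Scope ring_scope.
Set Implicit Arguments. Unset Strict Implicit.

(* Let H, E, F be the images under mu of the standard basis
   h = diag(1,-1), e, f of sl_2; the weights of W are the eigenvalues of H.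
   (1) If v is a weight vector of weight c <> 0, then E v or F v is a weight
       vector of weight c + 2 or c - 2, since [E,F] = H.
   (2) If a, b are independent weight vectors of weights al, be, the wedge
       does not vanish on span(a,b), so some a' ^ b' (a', b' in {a, b}) is
       nonzero; by equivariance it is an H-eigenvector of W^* of eigenvalue
       -(al' + be'), hence -(al' + be') is again a weight of W.
   Applied to v and its neighbour from (1), a weight c with |c| > 4 produces
   a weight of norm about 2|c| - 4 > |c|.  Since H has finitely many
   eigenvalues (the roots of a nonzero characteristic polynomial), no weight
   has norm > 4.  Finally, highest weight vectors of weight 4 in two distinct
   summands are independent, so (2) would produce the weight -8. *)

Definition sl2_triple (R : pzRingType) (n : nat) (H E F : 'M[R]_n) : Prop :=
  [/\ H *m E - E *m H = 2 *: E, H *m F - F *m H = - 2 *: F & E *m F - F *m E = H].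

Definition weight (R : pzRingType) (n : nat) (A : 'M[R]_n) (c : R) : Prop :=
  exists2 v : 'cV[R]_n, v != 0 & A *m v = c *: v.

Section Sl2Shift.
Variables (R : fieldType) (n : nat) (H E F : 'M[R]_n).
Hypothesis triple : sl2_triple H E F.

Lemma raise_weight (v : 'cV[R]_n) c : H *m v = c *: v -> H *m (E *m v) = (c + 2) *: (E *m v).
Proof.
case: triple => HE _ _ Hv.
rewrite mulmxA -[H *m E](subrK (E *m H)) HE mulmxDl -mulmxA Hv.
by rewrite -scalemxAl -scalemxAr scalerDl addrC.
Qed.

Lemma lower_weight (v : 'cV[R]_n) c : H *m v = c *: v -> H *m (F *m v) = (c - 2) *: (F *m v).
Proof.
case: triple => _ HF _ Hv.
rewrite mulmxA -[H *m F](subrK (F *m H)) HF mulmxDl -mulmxA Hv.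
by rewrite -scalemxAl -scalemxAr scalerDl addrC.
Qed.

(* A weight vector of nonzero weight c is not killed by both E and F
   (otherwise H v = [E,F] v = 0), so c + 2 or c - 2 is again a weight. *)
Lemma weight_shift (v : 'cV[R]_n) c : v != 0 -> H *m v = c *: v -> c != 0 ->
  exists2 c', c' = c + 2 \/ c' = c - 2 &
    exists2 u : 'cV[R]_n, u != 0 & H *m u = c' *: u.
Proof.
move=> v0 Hv c0; case: (eqVneq (E *m v) 0) => Ev; last first.
  by exists (c + 2); [left | exists (E *m v); last exact: raise_weight].
case: (eqVneq (F *m v) 0) => Fv; last first.
  by exists (c - 2); [right | exists (F *m v); last exact: lower_weight].
case: triple => _ _ EF.
have : H *m v = 0 by rewrite -EF mulmxBl -!mulmxA Ev Fv !mulmx0 subrr.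
by rewrite Hv => /eqP; rewrite scaler_eq0 (negbTE c0) (negbTE v0).
Qed.

End Sl2Shift.

Section StandardTriple.
Variable R : rcfType.

Definition sl2e : 'M[R]_2 := \matrix_(i < 2, j < 2) ((i == 0 :> nat) && (j == 1 :> nat))%:R.
Definition sl2f : 'M[R]_2 := \matrix_(i < 2, j < 2) ((i == 1 :> nat) && (j == 0 :> nat))%:R.

Lemma sl2_basis_traceless : [/\ \tr (sl2h R) = 0, \tr sl2e = 0 & \tr sl2f = 0].
Proof. by split; rewrite /mxtrace !big_ord_recr big_ord0 /= !mxE /=; lra. Qed.

Lemma sl2_basis_triple : sl2_triple (sl2h R) sl2e sl2f.
Proof.
split; apply/matrixP; case=> [[|[|?]] ?]; case=> [[|[|?]] ?] //;
  by rewrite !mxE ?big_ord_recr ?big_ord0 /= ?mxE /= -?val_eqE /=; lra.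
Qed.

Variables (n : nat) (G : 'M[R]_(n * n)) (mu : 'M[R]_2 -> 'M[R]_n).
Hypothesis mu_morph : sl2_morphism G mu.

Lemma sl2_morphism_triple : sl2_triple (mu (sl2h R)) (mu sl2e) (mu sl2f).
Proof.
case: mu_morph => _ mu_lin mu_br _; case: sl2_basis_traceless => th te tf.
have mu0 : mu 0 = 0.
  have := mu_lin 1 0 0 (mxtrace0 _ _) (mxtrace0 _ _).
  by rewrite !scale1r !addr0 => /esym/eqP; rewrite -subr_eq0 addrK => /eqP.
have muZ a X : \tr X = 0 -> mu (a *: X) = a *: mu X.
  by move=> tX; have := mu_lin a X 0 tX (mxtrace0 _ _); rewrite !addr0 mu0 addr0.
case: sl2_basis_triple => he hf ef; split.
- by rewrite -[LHS]/(lie_br _ _) -mu_br // /lie_br he muZ.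
- by rewrite -[LHS]/(lie_br _ _) -mu_br // /lie_br hf muZ.
- by rewrite -[LHS]/(lie_br _ _) -mu_br // /lie_br ef.
Qed.

End StandardTriple.

Section WeightsAndIndependence.
Variables (R : fieldType) (n : nat).
Implicit Types (A : 'M[R]_n) (a b v : 'cV[R]_n).

Lemma trmx_eigen A v c : A *m v = c *: v -> v^T *m A^T = c *: v^T.
Proof. by move=> Av; rewrite -trmx_mul Av linearZ. Qed.

(* An eigenvalue on the dual space (row vectors) is a weight:
   A and its transpose have the same eigenvalues. *)
Lemma row_eigen_weight A (phi : 'rV[R]_n) c :
  phi != 0 -> phi *m A = c *: phi -> weight A c.
Proof.
move=> phi0 Aphi; have : \det (A - c%:M) == 0.
  by apply/det0P; exists phi; rewrite // mulmxBr mul_mx_scalar Aphi subrr.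
rewrite -det_tr => /det0P [r r0 Ar]; exists r^T; first by rewrite trmx_eq0.
apply/eqP; rewrite -subr_eq0 -mul_scalar_mx -mulmxBl.
by rewrite -[A - _]trmxK -trmx_mul Ar trmx0.
Qed.

(* Weights are roots of a fixed nonzero polynomial, hence finitely many. *)
Lemma weight_root A c : weight A c -> root (char_poly A^T) c.
Proof.
case=> v v0 Av; rewrite -eigenvalue_root_char; apply/eigenvalueP.
by exists v^T; rewrite ?trmx_eq0 // (trmx_eigen Av).
Qed.

Lemma independent_pair a b : a != 0 -> b != 0 -> (a^T :&: b^T)%MS = 0 ->
  \rank (row_mx a b) = 2%N.
Proof.
move=> a0 b0 ab0; rewrite -mxrank_tr tr_row_mx -(addsmxE a^T b^T).
by rewrite mxrank_disjoint_sum // !rank_rV !trmx_eq0 a0 b0.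
Qed.

Lemma eigen_disjoint A a b al be : A *m a = al *: a -> A *m b = be *: b ->
  al != be -> (a^T :&: b^T)%MS = 0.
Proof.
move=> Aa Ab al_be; apply/eqP/rowV0P => x.
rewrite sub_capmx => /andP[/sub_rVP[k1 ->] /sub_rVP[k2 xb]].
have := congr1 (mulmx^~ A^T) xb; rewrite /= -!scalemxAl (trmx_eigen Aa) (trmx_eigen Ab).
rewrite !scalerA mulrC [k2 * _]mulrC -!scalerA -xb => /eqP.
by rewrite -subr_eq0 -scalerBl scaler_eq0 subr_eq0 (negbTE al_be) => /eqP.
Qed.

Lemma summands_disjoint k (U : 'I_k -> 'M[R]_n) i j a b :
  mxdirect (\sum_(l < k) U l) -> i != j ->
  (a^T <= U i)%MS -> (b^T <= U j)%MS -> (a^T :&: b^T)%MS = 0.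
Proof.
move=> /mxdirect_sumsP Udir ij aU bU; apply/eqP/rowV0P => x.
rewrite sub_capmx => /andP[xa xb].
suff : (x <= U i :&: \sum_(l | l != i) U l)%MS by rewrite Udir // submx0 => /eqP.
rewrite sub_capmx (submx_trans xa aU) (submx_trans xb) //.
by apply: submx_trans bU _; apply: (sumsmx_sup j); rewrite // eq_sym.
Qed.

End WeightsAndIndependence.

Section WedgeWeights.
Variables (R : rcfType) (n : nat) (wedge : 'cV[R]_n -> 'cV[R]_n -> 'rV[R]_n).
Variable A : 'M[R]_n.
Hypothesis wedge_bil : wedge_bilinear wedge.
Hypothesis wedge_equiv : forall a b, - (wedge a b *m A) = wedge (A *m a) b + wedge a (A *m b).
Hypothesis wedge_nv : wedge_nonvanishing2 wedge.

Lemma wedge_combl s t a b y : wedge (s *: a + t *: b) y = s *: wedge a y + t *: wedge b y.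
Proof.
case: wedge_bil => lin _; have wedge0 : wedge 0 y = 0.
  by have := lin 1 0 0 y; rewrite !scale1r !addr0 => /esym/eqP; rewrite -subr_eq0 addrK => /eqP.
by rewrite lin; congr (_ + _); have := lin t b 0 y; rewrite wedge0 !addr0.
Qed.

Lemma wedge_combr s t a b y : wedge y (s *: a + t *: b) = s *: wedge y a + t *: wedge y b.
Proof.
case: wedge_bil => _ lin; have wedge0 : wedge y 0 = 0.
  by have := lin 1 y 0 0; rewrite !scale1r !addr0 => /esym/eqP; rewrite -subr_eq0 addrK => /eqP.
by rewrite lin; congr (_ + _); have := lin t y b 0; rewrite wedge0 !addr0.
Qed.

Lemma wedge_eigen (a b : 'cV[R]_n) al be : A *m a = al *: a -> A *m b = be *: b ->
  wedge a b *m A = - (al + be) *: wedge a b.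
Proof.
move=> Aa Ab; apply: oppr_inj; rewrite wedge_equiv Aa Ab scaleNr opprK scalerDl.
have := wedge_combl al 0 a 0 b; have := wedge_combr be 0 b 0 a.
by rewrite !scale0r !addr0 => -> ->.
Qed.

Lemma plane_weight (a b : 'cV[R]_n) al be : \rank (row_mx a b) = 2%N ->
  A *m a = al *: a -> A *m b = be *: b ->
  exists2 x, x \in [:: al; be] & exists2 y, y \in [:: al; be] & weight A (- (x + y)).
Proof.
move=> rk Aa Ab; have [s [t [s' [t' nz]]]] := wedge_nv rk.
have weight_of u v x y : A *m u = x *: u -> A *m v = y *: v -> wedge u v != 0 ->
    weight A (- (x + y)).
  by move=> Au Av uv; apply: (row_eigen_weight uv); apply: wedge_eigen.
have al_in : al \in [:: al; be] by rewrite inE eqxx.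
have be_in : be \in [:: al; be] by rewrite !inE eqxx orbT.
case: (eqVneq (wedge a a) 0) => [aa|]; last by move/(weight_of _ _ _ _ Aa Aa); eauto.
case: (eqVneq (wedge a b) 0) => [ab|]; last by move/(weight_of _ _ _ _ Aa Ab); eauto.
case: (eqVneq (wedge b a) 0) => [ba|]; last by move/(weight_of _ _ _ _ Ab Aa); eauto.
case: (eqVneq (wedge b b) 0) => [bb|]; last by move/(weight_of _ _ _ _ Ab Ab); eauto.
by move: nz; rewrite wedge_combl !wedge_combr aa ab ba bb !(scaler0, addr0) eqxx.
Qed.

End WedgeWeights.

(* If |x - c|, |y - c| <= 2 then |x + y| >= 2|c| - 4, which exceeds |c| once |c| > 4. *)
Lemma norm_sum_escapes (R : realDomainType) (c x y : R) :
  4 < `|c| -> `|x - c| <= 2 -> `|y - c| <= 2 -> `|c| < `|x + y|.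
Proof.
move=> c4 xc yc.
have split2c : c *+ 2 = (x + y) - ((x - c) + (y - c)) by rewrite mulr2n; ring.
have := ler_normB (x + y) ((x - c) + (y - c)); rewrite -split2c normrMn mulr2n.
by have := ler_normD (x - c) (y - c); lra.
Qed.

(* A property holding only for roots of a nonzero polynomial cannot contain
   elements of norm > b if each such element is beaten in norm by another:
   otherwise one would get infinitely many distinct roots. *)
Lemma roots_norm_bounded (R : realDomainType) (p : {poly R}) (P : R -> Prop) (b : R) :
  p != 0 -> (forall x, P x -> root p x) ->
  (forall x, P x -> b < `|x| -> exists2 y, P y & `|x| < `|y|) ->
  forall x, P x -> `|x| <= b.
Proof.
move=> p0 Proot escape x Px; rewrite leNgt; apply/negP => bx.
have chain m : exists2 y, P y /\ b < `|y| & exists2 rs : seq R, size rs = m &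
    [&& uniq rs, all (root p) rs & all (fun r => `|r| < `|y|) rs].
  elim: m => [|m [y [Py yb] [rs size_rs /and3P[urs rrs ltrs]]]]; first by exists x; last exists [::].
  have [z Pz yz] := escape y Py yb.
  exists z; first by split; last exact: lt_trans yz.
  exists (y :: rs); first by rewrite /= size_rs.
  rewrite /= urs (Proot y Py) rrs yz /= andbT; apply/andP; split.
    by apply/negP => /(allP ltrs); rewrite ltxx.
  by apply/allP => r /(allP ltrs) /lt_trans; apply.
have [y _ [rs size_rs /and3P[urs rrs _]]] := chain (size p).
by have := max_poly_roots p0 rrs urs; rewrite size_rs ltnn.
Qed.

Section WeightBound.
Variables (R : rcfType) (n : nat) (G : 'M[R]_(n * n)).
Variables (wedge : 'cV[R]_n -> 'cV[R]_n -> 'rV[R]_n) (mu : 'M[R]_2 -> 'M[R]_n).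
Hypotheses (wedge_bil : wedge_bilinear wedge) (wedge_equiv : wedge_equivariant G wedge).
Hypotheses (wedge_nv : wedge_nonvanishing2 wedge) (mu_morph : sl2_morphism G mu).

Let H := mu (sl2h R).

Lemma wedge_equiv_h a b : - (wedge a b *m H) = wedge (H *m a) b + wedge a (H *m b).
Proof.
case: mu_morph => mu_in _ _ _; have [th _ _] := @sl2_basis_traceless R.
by apply: wedge_equiv; apply: mu_in.
Qed.

(* A weight of norm > 4 is beaten in norm by another weight: combine the
   neighbouring weight c +- 2 with c through the wedge. *)
Lemma weight_escape c : weight H c -> 4 < `|c| -> exists2 c', weight H c' & `|c| < `|c'|.
Proof.
case=> v v0 Hv c4; have c0 : c != 0 by apply: contraTneq c4 => ->; rewrite normr0 ltNge ler0n.
have [c' c'_near [u u0 Hu]] := weight_shift (sl2_morphism_triple mu_morph) v0 Hv c0.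
have [d [d2 c'E]] : exists d : R, `|d| = 2 /\ c' = c + d.
  by case: c'_near => ->; [exists 2 | exists (-2)]; rewrite ?normrN normr_nat.
have cc' : c != c'.
  by rewrite c'E -subr_eq0 opprD addrA subrr sub0r oppr_eq0 -normr_eq0 d2 pnatr_eq0.
have rk := independent_pair v0 u0 (eigen_disjoint Hv Hu cc').
have [x xc [y yc wxy]] := plane_weight wedge_bil wedge_equiv_h wedge_nv rk Hv Hu.
have near z : z \in [:: c; c'] -> `|z - c| <= 2.
  by rewrite !inE => /orP[] /eqP ->; rewrite ?subrr ?normr0 ?ler0n // c'E addrAC subrr add0r d2.
by exists (- (x + y)); rewrite // normrN norm_sum_escapes ?near.
Qed.

Lemma weight_bound c : weight H c -> `|c| <= 4.
Proof.
apply: (roots_norm_bounded (p := char_poly H^T)) => [||c'].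
- by rewrite -size_poly_eq0 size_char_poly.
- exact: weight_root.
- exact: weight_escape.
Qed.

End WeightBound.

Theorem lemma5p3 (R : rcfType) (n : nat) (G : 'M[R]_(n * n))
  (wedge : 'cV[R]_n -> 'cV[R]_n -> 'rV[R]_n) (mu : 'M[R]_2 -> 'M[R]_n) :
  lie_subalgebra G -> semisimple G ->
  wedge_bilinear wedge -> wedge_symmetric wedge ->
  wedge_equivariant G wedge -> wedge_nonvanishing2 wedge ->
  sl2_morphism G mu ->
  forall (k : nat) (U : 'I_k -> 'M[R]_n), sl2_decomposition mu U ->
    (forall i lam, highest_weight mu (U i) lam -> lam <= 4) /\
    (forall i j, highest_weight mu (U i) 4 -> highest_weight mu (U j) 4 -> i = j).
Proof.
move=> _ _ bil _ equiv nv morph k U [_ Udir _].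
have bound c := weight_bound bil equiv nv morph (c := c).
split=> [i lam [[v [v0 _ Hv]] _] | i j [[a [a0 aU Ha]] _] [[b [b0 bU Hb]] _]].
  by apply: le_trans (ler_norm lam) (bound _ _); exists v.
(* Highest weight vectors of weight 4 in distinct summands are independent,
   so -8 would be a weight, contradicting the bound. *)
apply/eqP; apply: contraT => ij.
have rk := independent_pair a0 b0 (summands_disjoint Udir ij aU bU).
have [x x4 [y y4 wxy]] := plane_weight bil (wedge_equiv_h equiv morph) nv rk Ha Hb.
move: x4 y4 (bound _ wxy); rewrite !inE !orbb => /eqP -> /eqP ->.
by rewrite normrN -natrD normr_nat ler_nat.
Qed.
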